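(* (i) Let $n>1$ be an odd integer. Then there is no positive integer $m$ with $(f(m),d(m))=(n,2n)$, and there is no positive integer $m$ with $(f(m),d(m))=(n,4n)$. (ii) Let $L$ be a Linnik constant. There is a constant $C>0$ (depending only on $L$) such that for all odd primes $p,q$ with $p<q$, $p\mid q-1$ and $p^2\nmid q-1$, there exists a positive integer $m\le C\,p\,(pq)^{L+1}$ with $f(m)=q$ and $d(m)=pq$.
   Context: For a positive integer $m$, let $\varphi(m)$ be Euler's function and $\lambda(m)$ the Carmichael function (the exponent of the multiplicative group $(\mathbb{Z}/m\mathbb{Z})^*$). Let $\mathrm{rad}(m)$ be the product of the distinct primes dividing $m$. Let $\delta=2$ if $4\mid m$ and $\delta=1$ otherwise. Define $$ d(m)=\gcd\big(m,\ \delta\,\varphi(\mathrm{rad}(m))\big),\qquad f(m)=\gcd\big(m,\ \delta\,\lambda(m)\varphi(\mathrm{rad}(m))/\varphi(m)\big). $$ A Linnik constant is a positive number $L$ such that there is an absolute constant $c>0$ with the property that for all integers $1\le a<q$ with $\gcd(a,q)=1$, the smallest prime $p(a,q)$ in the progression $\{a+jq: j\ge 0\}$ satisfies $p(a,q)\le c\, q^L$ (such $L$ exist by Linnik's theorem; e.g. $L=5$ works). *)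

From mathcomp Require Import all_boot all_algebra all_fingroup all_solvable.
From Stdlib Require Import Reals.

Set Implicit Arguments. Unset Strict Implicit. Unset Printing Implicit Defensive.

(* Carmichael function: exponent of the unit group of Z/mZ.
   ('Z_m is Z/mZ for m >= 2; for m = 1 it is Z/2Z whose unit group is
   trivial, giving lambda 1 = 1, which is correct.) *)
Definition carmichael (m : nat) : nat := exponent (units_Zp m).

Definition rad (m : nat) : nat := \prod_(p <- primes m) p.

Definition delta (m : nat) : nat := if 4 %| m then 2 else 1.

Definition d_fun (m : nat) : nat := gcdn m (delta m * totient (rad m)).

(* delta*lambda(m)*phi(rad m)/phi(m) is always an integer; exact nat division. *)
Definition f_fun (m : nat) : nat :=
  gcdn m ((delta m * carmichael m * totient (rad m)) %/ totient m).

Definition linnik_constant (L : R) : Prop :=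
  (0 < L)%R /\
  exists c : R, (0 < c)%R /\
    forall a q : nat, 1 <= a -> a < q -> coprime a q ->
      exists j : nat, prime (a + j * q) /\
        (INR (a + j * q) <= c * Rpower (INR q) L)%R.

(* Part (i): if d(m) is 2n or 4n with n odd and n > 1, the least prime l of n
   divides both m and phi(rad m), so some prime x = 1 (mod l) also divides m
   and 4 | phi(rad m).  Then 8 | m would give 8 | d(m); hence v_2(m) is 1 or
   2.  Since p^(v_p(m) - 1) | lambda(m) for every odd p (lifting the exponent
   for 1 + p (m / p^v_p(m))), one gets 2m | delta lambda(m) rad(m), that is
   2 phi(m) | delta lambda(m) phi(rad m), so 2 | f(m) = n.
   Part (ii): Linnik gives a prime r = 2 (mod p), r = 1 (mod q) of size
   O((pq)^L); for m = p^2 q r, phi(rad m) = (p-1)(q-1)(r-1) is divisible by pq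
   but neither by p^2 nor by r, and lambda(m) divides it and is divisible by p
   and q, whence d(m) = pq and f(m) = gcd(m, lambda(m) / p) = q. *)

From Pilot Require Import Defs.
From mathcomp Require Import all_boot all_algebra all_fingroup all_solvable.
From Stdlib Require Import Reals Lra.
From mathcomp Require Import zify ring.

Set Implicit Arguments. Unset Strict Implicit. Unset Printing Implicit Defensive.

(* Reals rebinds [^] to [Nat.pow] in nat_scope. *)
Local Notation "x ^ y" := (expn x y) : nat_scope.

Import GRing.Theory FinRing.Theory.

Lemma expn_mod1_mulr x y z N : x ^ y = 1 %[mod N] -> x ^ (y * z) = 1 %[mod N].
Proof. by move=> H; rewrite expnM -modnXm H modnXm exp1n. Qed.

Lemma expn_mod1_gcd x a b N : 0 < a ->
  x ^ a = 1 %[mod N] -> x ^ b = 1 %[mod N] -> x ^ gcdn a b = 1 %[mod N].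
Proof.
move=> a_gt0 x_a x_b; have [ka kb def _] := egcdnP b a_gt0.
have x_kb : x ^ (kb * b) = 1 %[mod N] by rewrite mulnC expn_mod1_mulr.
have x_ka : x ^ (ka * a) = 1 %[mod N] by rewrite mulnC expn_mod1_mulr.
by rewrite -[x ^ gcdn a b]mul1n -modnMml -{1}x_kb modnMml -expnD -def.
Qed.

Section CarmichaelUnits.
Local Open Scope ring_scope.

Lemma expn_carmichael (m x : nat) :
  (1 < m)%nat -> coprime x m -> (x ^ carmichael m = 1 %[mod m])%nat.
Proof.
move=> m_gt1 cxm.
have ux : (x%:R : 'Z_m) \is a GRing.unit by rewrite unitZpE // coprime_sym.
pose u : {unit 'Z_m} := Sub (x%:R : 'Z_m) ux.
have /(congr1 val) := expg_exponent (in_setT u).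
rewrite val_unitX /= -natrX => /(congr1 (@nat_of_ord _)).
by rewrite val_Zp_nat // => ->; rewrite -(val_Zp_nat m_gt1 1).
Qed.

Lemma carmichael_dvd (m T : nat) : (1 < m)%nat ->
  (forall x, coprime x m -> x ^ T = 1 %[mod m])%nat -> (carmichael m %| T)%nat.
Proof.
move=> m_gt1 H; apply/exponentP => u _; apply: val_inj; rewrite val_unitX /=.
have uE : val u = (val (val u) : nat)%:R :> 'Z_m by rewrite natr_Zp.
have cu : coprime (val (val u)) m.
  by have := valP u; rewrite {1}uE unitZpE // coprime_sym.
by rewrite uE -natrX -Zp_nat_mod // H // Zp_nat_mod.
Qed.

End CarmichaelUnits.

Lemma prime_dvd_carmichael m l : 0 < m -> prime l -> l %| totient m -> l %| carmichael m.
Proof.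
move=> m_gt0 l_pr l_dvd.
have : l \in primes (carmichael m).
  by rewrite primes_exponent card_units_Zp // mem_primes l_pr totient_gt0 m_gt0.
by rewrite mem_primes => /and3P[].
Qed.

Lemma carmichael_even m : 2 < m -> 2 %| carmichael m.
Proof.
move=> m_gt2; have m_gt1 : 1 < m by lia.
have sq : m.-1 ^ 2 = 1 %[mod m].
  have -> : m.-1 ^ 2 = (m - 2) * m + 1 by rewrite expnS expn1; nia.
  by rewrite modnMDl.
have cm : coprime m.-1 m by rewrite -{2}(prednK (ltnW m_gt1)) coprimenS.
rewrite dvdn2; apply/negP => odd_l.
have := expn_carmichael m_gt1 cm.
rewrite -[carmichael m]odd_double_half odd_l expnD expn1 -muln2 (mulnC _ 2).
by rewrite -modnMmr expn_mod1_mulr // modnMmr muln1 !modn_small; lia.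
Qed.

Lemma expn_1add_prime p y : prime p -> 2 < p -> p %| y ->
  exists z, (1 + y) ^ p = 1 + p * y * (1 + y * z).
Proof.
move=> p_pr p_gt2 p_dvd_y.
set S := \sum_(2 <= i < p.+1) 'C(p, i) * y ^ i.
have S_dvd : p * y * y %| S.
  rewrite /S big_nat_cond; apply: dvdn_sum => i /andP[/andP[i_ge2 i_le] _].
  have yiE : y ^ i = y ^ (i - 2) * y * y by rewrite -!expnSr; congr (_ ^ _); lia.
  rewrite yiE !mulnA; do 2!apply: dvdn_mul => //.
  have [i_lt | i_gt | ->] := ltngtP i p.
  - by rewrite dvdn_mulr // prime_dvd_bin //; lia.
  - by lia.
  - by rewrite binn mul1n dvdn_exp //; lia.
exists (S %/ (p * y * y)).
have SE := divnK S_dvd.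
rewrite expnDn -(big_mkord xpredT (fun i => 'C(p, i) * (1 ^ (p - i) * y ^ i))).
rewrite big_ltn // big_ltn; last by lia.
rewrite bin0 bin1 !exp1n !mul1n expn1.
under eq_bigr do rewrite exp1n mul1n.
rewrite -/S expn0; set w := S %/ _ in SE *; rewrite -SE; ring.
Qed.

Lemma expn_1add_pmul_pfactor p t i : prime p -> 2 < p ->
  exists w, (1 + p * t) ^ (p ^ i) = 1 + p ^ i.+1 * t * (1 + p * w).
Proof.
move=> p_pr p_gt2; elim: i => [|i [w IH]].
  by exists 0; rewrite expn0 expn1 !muln0 addn0 muln1.
rewrite expnSr expnM IH.
have [|z ->] := @expn_1add_prime p (p ^ i.+1 * t * (1 + p * w)) p_pr p_gt2.
  by rewrite expnS -!mulnA dvdn_mulr.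
exists (w + p ^ i * t * (1 + p * w) * z * (1 + p * w)).
rewrite !expnS; set P := p ^ i; ring.
Qed.

Lemma pfactor_dvd_carmichael m p k x : 1 < m -> prime p -> coprime x m ->
  x ^ (p ^ k.+1) = 1 %[mod m] -> x ^ (p ^ k) != 1 %[mod m] ->
  p ^ k.+1 %| carmichael m.
Proof.
move=> m_gt1 p_pr cxm x_pk1 x_pk.
have := expn_mod1_gcd (exponent_gt0 _) (expn_carmichael m_gt1 cxm) x_pk1.
have /(dvdn_pfactor _ _ p_pr) [j j_le gE] := dvdn_gcdr (carmichael m) (p ^ k.+1).
have [j_lt x_g | j_ge _] := ltnP j k.+1.
  case/eqP: x_pk; rewrite -(subnKC (j_lt : j <= k)) expnD.
  by apply: expn_mod1_mulr; rewrite -gE.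
have -> : k.+1 = j by apply/eqP; rewrite eqn_leq j_le j_ge.
by rewrite -gE dvdn_gcdl.
Qed.

Lemma pfactor_pred_dvd_carmichael m p : 0 < m -> prime p -> 2 < p ->
  p ^ (logn p m).-1 %| carmichael m.
Proof.
move=> m_gt0 p_pr p_gt2; have [r cpr mE] := pfactor_coprime p_pr m_gt0.
move: mE; case: (logn p m) => [|[|k]] mE //=.
(* [1 + p r] has order exactly [p ^ k.+1] modulo [m = r p ^ k.+2]. *)
have r_gt0 : 0 < r by move: m_gt0; rewrite mE muln_gt0 => /andP[].
have pk_gt1 : 1 < p ^ k.+2 by rewrite -(expn0 p) ltn_exp2l ?prime_gt1.
have m_gt1 : 1 < m by rewrite mE; nia.
have cxm : coprime (1 + p * r) m.
  have c1 a b : coprime (1 + a * b) b by rewrite /coprime gcdnC addnC gcdnMDl gcdn1.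
  by rewrite mE coprimeMr c1 coprimeXr // mulnC c1.
apply: (pfactor_dvd_carmichael m_gt1 p_pr cxm).
  have [w ->] := expn_1add_pmul_pfactor r k.+1 p_pr p_gt2.
  by rewrite mE (mulnC (p ^ _) r) [_ * (1 + _)]mulnC addnC modnMDl.
have [w ->] := expn_1add_pmul_pfactor r k p_pr p_gt2.
rewrite -[X in _ == X %[mod _]]addn0 eqn_modDl mod0n -/(dvdn _ _) mE.
have -> : r * p ^ k.+2 = p ^ k.+1 * r * p by rewrite expnSr; ring.
rewrite dvdn_pmul2l; last by rewrite muln_gt0 expn_gt0 prime_gt0.
by rewrite dvdn_addl ?dvdn_mulr // dvdn1; lia.
Qed.

Lemma rad_gt0 m : 0 < Defs.rad m.
Proof.
rewrite /Defs.rad big_seq prodn_cond_gt0 // => p.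
by rewrite mem_primes => /andP[/prime_gt0].
Qed.

Lemma dvdn_rad m p : p \in primes m -> p %| Defs.rad m.
Proof. by move=> pm; rewrite /Defs.rad (big_rem p) //= dvdn_mulr. Qed.

Lemma totient_prod_uniq_primes s : uniq s -> all prime s ->
  totient (\prod_(p <- s) p) = \prod_(p <- s) p.-1.
Proof.
elim: s => [|p s IHs] /=; first by rewrite !big_nil.
move=> /andP[p_s s_uniq] /andP[p_pr s_pr].
rewrite !big_cons totient_coprime ?(totient_prime p_pr) ?IHs //.
rewrite prime_coprime // Euclid_dvd_prod // big_has; apply/hasPn => x xs.
rewrite dvdn_prime2 //; last exact: (allP s_pr).
by apply: contraNneq p_s => ->.
Qed.

Lemma totient_rad m : totient (Defs.rad m) = \prod_(p <- primes m) p.-1.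
Proof.
rewrite totient_prod_uniq_primes ?primes_uniq //.
by apply/allP => p; rewrite mem_primes => /andP[].
Qed.

Lemma totient_mul_rad m : 0 < m ->
  totient m * Defs.rad m = m * totient (Defs.rad m).
Proof.
move=> m_gt0; rewrite totientE // totient_rad /Defs.rad -big_split /=.
have mE : m = \prod_(p <- primes m) p ^ logn p m.
  by rewrite {1}(prod_prime_decomp m_gt0) prime_decompE big_map.
rewrite [m * _](_ : _ = \prod_(p <- primes m) (p ^ logn p m * p.-1)).
  apply: eq_big_seq => p; rewrite -logn_gt0 => e_gt0.
  by rewrite -mulnA -expnSr prednK // mulnC.
by rewrite big_split /= -mE.
Qed.

Lemma dvdn_delta_carmichael_rad m : 2 < m -> 2 %| m -> ~~ (8 %| m) ->
  2 * m %| delta m * carmichael m * Defs.rad m.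
Proof.
move=> m_gt2 m_even m_n8; have m_gt0 : 0 < m by lia.
apply/dvdn_partP => [|p]; first by rewrite muln_gt0.
rewrite mem_primes => /and3P[p_pr _ p_dvd]; rewrite p_part lognM // logn_prime //.
have rad2 : 2 %| Defs.rad m by rewrite dvdn_rad // mem_primes m_gt0 m_even.
have [-> | p_ne2] /= := eqVneq p 2.
  have e_ge1 : 1 <= logn 2 m by rewrite -(pfactor_dvdn 1).
  have e_le2 : logn 2 m <= 2 by rewrite leqNgt -(pfactor_dvdn 3).
  rewrite /delta -[4]/(2 ^ 2) (pfactor_dvdn 2) //.
  have [e_eq1 | e_eq2] : logn 2 m = 1 \/ logn 2 m = 2 by lia.
    by rewrite e_eq1 mul1n (_ : 2 ^ 2 = 2 * 2) // dvdn_mul // carmichael_even.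
  by rewrite e_eq2 (_ : 2 ^ 3 = 2 * 2 * 2) // !dvdn_mul // carmichael_even.
have p_gt2 : 2 < p by have := prime_gt1 p_pr; lia.
have p_m : p \in primes m.
  rewrite mem_primes p_pr m_gt0 -(@Gauss_dvdr _ 2) //.
  by rewrite prime_coprime // dvdn_prime2 // eq_sym.
rewrite -mulnA dvdn_mull // -(prednK (_ : 0 < logn p m)) ?logn_gt0 // expnSr.
by rewrite dvdn_mul ?dvdn_rad ?pfactor_pred_dvd_carmichael.
Qed.

Lemma f_fun_even m : 2 < m -> 2 %| m -> ~~ (8 %| m) -> 2 %| f_fun m.
Proof.
move=> m_gt2 m_even m_n8; have m_gt0 : 0 < m by lia.
have : 2 * totient m %| delta m * carmichael m * totient (Defs.rad m).
  rewrite -(dvdn_pmul2r (rad_gt0 m)) -mulnA totient_mul_rad // mulnA.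
  have -> : delta m * carmichael m * totient (Defs.rad m) * Defs.rad m =
            delta m * carmichael m * Defs.rad m * totient (Defs.rad m) by ring.
  by rewrite dvdn_mul // dvdn_delta_carmichael_rad.
move=> dvd2; rewrite /f_fun dvdn_gcd m_even dvdn_divRL //.
by apply: dvdn_trans dvd2; rewrite dvdn_mull.
Qed.

Lemma prime_dvd_totient_rad m l : prime l -> l %| totient (Defs.rad m) ->
  exists2 x, x \in primes m & l %| x.-1.
Proof. by move=> l_pr; rewrite totient_rad Euclid_dvd_prod // big_has => /hasP. Qed.

Lemma four_dvd_totient_rad m x y : x \in primes m -> y \in primes m -> x != y ->
  odd x -> odd y -> 4 %| totient (Defs.rad m).
Proof.
move=> xm ym xy x_odd y_odd.
have even_pred z : odd z -> 2 %| z.-1 by case: z => //= z; rewrite dvdn2 => ->.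
rewrite totient_rad (big_rem x) //= (big_rem y) /=; last first.
  by rewrite mem_rem_uniq ?primes_uniq // inE eq_sym xy.
by rewrite mulnA (_ : 4 = 2 * 2) // dvdn_mulr // dvdn_mul // even_pred.
Qed.

Lemma eight_dvd_d_fun m : 8 %| m -> 4 %| totient (Defs.rad m) -> 8 %| d_fun m.
Proof.
move=> m8 phi4; rewrite /d_fun /delta dvdn_gcd m8 (dvdn_trans _ m8) //.
by rewrite (_ : 8 = 2 * 4) // dvdn_pmul2l.
Qed.

Lemma d_fun_neq_odd_mul n m k : odd n -> 1 < n -> 0 < m -> k = 2 \/ k = 4 ->
  f_fun m = n -> d_fun m != k * n.
Proof.
move=> n_odd n_gt1 m_gt0 kE fE; apply/eqP => dE.
have [k_even k_dvd4] : 2 %| k /\ k %| 4 by case: kE => ->.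
have d_dvd_m : d_fun m %| m by apply: dvdn_gcdl.
have d_dvd_phi : d_fun m %| delta m * totient (Defs.rad m) by apply: dvdn_gcdr.
set l := pdiv n; have l_pr : prime l by apply: pdiv_prime.
have l_odd : odd l := dvdn_odd (pdiv_dvd n) n_odd.
have l_gt2 : 2 < l by apply: odd_prime_gt2.
have l_dvd_d : l %| d_fun m by rewrite dE dvdn_mull // pdiv_dvd.
have l_m : l \in primes m by rewrite mem_primes l_pr m_gt0 (dvdn_trans l_dvd_d).
have /(prime_dvd_totient_rad l_pr) [x x_m l_x] : l %| totient (Defs.rad m).
  rewrite -(@Gauss_dvdr _ (delta m)) ?(dvdn_trans l_dvd_d) //.
  by rewrite /delta; case: ifP; rewrite ?coprimen1 // coprime_sym coprime2n.
have x_pr : prime x by move: x_m; rewrite mem_primes => /andP[].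
have x1_gt0 : 0 < x.-1 by rewrite -subn1 subn_gt0 prime_gt1.
have l_lt_x : l < x.
  by rewrite (leq_ltn_trans (dvdn_leq x1_gt0 l_x)) // ltn_predL prime_gt0.
have x_odd : odd x.
  by case: (even_prime x_pr) => // x2; move: (ltn_trans l_gt2 l_lt_x); rewrite x2.
have phi4 := four_dvd_totient_rad l_m x_m (negbT (ltn_eqF l_lt_x)) l_odd x_odd.
have [m8 | m_n8] := boolP (8 %| m).
  have c8n : coprime 8 n by apply: (@coprimeXl 3 2); rewrite coprime2n.
  have := eight_dvd_d_fun m8 phi4; rewrite dE Gauss_dvdl // => k8.
  by have := dvdn_trans k8 k_dvd4.
have m_even : 2 %| m.
  by rewrite (dvdn_trans k_even) // (dvdn_trans _ d_dvd_m) // dE dvdn_mulr.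
have m_gt2 : 2 < m := leq_trans l_gt2 (dvdn_leq m_gt0 (dvdn_trans l_dvd_d d_dvd_m)).
by move: (f_fun_even m_gt2 m_even m_n8); rewrite fE dvdn2 n_odd.
Qed.

Section ThreePrimes.

Variables p q r : nat.
Hypotheses (p_pr : prime p) (q_pr : prime q) (r_pr : prime r) (p_odd : odd p).
Hypotheses (p_lt_q : p < q) (p_dvd_q1 : p %| q.-1) (pp_ndvd_q1 : ~~ (p * p %| q.-1)).
Hypotheses (r_mod_q : r %% q = 1) (r_mod_p : r %% p = 2).

Local Notation m := (p * p * q * r).
Local Notation T := (p.-1 * q.-1 * r.-1).

Let p_gt2 : 2 < p. Proof. exact: odd_prime_gt2. Qed.

Let q_lt_r : q < r.
Proof.
have r_gt1 := prime_gt1 r_pr; rewrite ltnNge; apply/negP => r_le_q.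
have [r_eq | r_lt] : r = q \/ r < q by lia.
  by move: r_mod_q; rewrite r_eq modnn.
by move: r_mod_q; rewrite modn_small //; lia.
Qed.

Let m_gt0 : 0 < m. Proof. by rewrite !muln_gt0 !prime_gt0. Qed.

Let coprime_pq : coprime p q.
Proof. by rewrite prime_coprime // dvdn_prime2 // ltn_eqF. Qed.
Let coprime_pr : coprime p r.
Proof. by rewrite prime_coprime // dvdn_prime2 // ltn_eqF // (ltn_trans p_lt_q). Qed.
Let coprime_qr : coprime q r.
Proof. by rewrite prime_coprime // dvdn_prime2 // ltn_eqF. Qed.

Lemma delta_three_primes : delta m = 1.
Proof.
rewrite /delta; case: ifP => // /(dvdn_trans (isT : 2 %| 4)).
have q_odd : odd q by case: (even_prime q_pr) => // q2; lia.
have r_odd : odd r by case: (even_prime r_pr) => // r2; lia.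
by rewrite dvdn2 !oddM p_odd q_odd r_odd.
Qed.

Lemma primes_three_primes : perm_eq (primes m) [:: p; q; r].
Proof.
apply: uniq_perm; rewrite ?primes_uniq //=.
  by rewrite !inE negb_or !ltn_eqF // (ltn_trans p_lt_q).
move=> y; rewrite mem_primes m_gt0 !inE /=; apply/andP/idP => [[y_pr]|].
  by rewrite !Euclid_dvdM // !dvdn_prime2 // orbb orbA.
case/or3P => /eqP -> //; split => //.
- by rewrite -!mulnA dvdn_mulr.
- by rewrite dvdn_mulr // dvdn_mull.
- by rewrite dvdn_mull.
Qed.

Lemma totient_rad_three_primes : totient (Defs.rad m) = T.
Proof.
rewrite totient_rad (perm_big _ primes_three_primes).
by rewrite !big_cons big_nil /= muln1 mulnA.
Qed.

Lemma totient_three_primes : totient m = p * T.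
Proof.
rewrite totient_coprime ?coprimeMl ?coprime_pr ?coprime_qr //.
rewrite totient_coprime ?coprimeMl ?coprime_pq // mulnn totient_pfactor //.
by rewrite !totient_prime //; ring.
Qed.

Lemma carmichael_three_primes_dvd : carmichael m %| T.
Proof.
have m_gt1 : 1 < m.
  by apply: leq_trans (prime_gt1 p_pr) (dvdn_leq m_gt0 _); rewrite -!mulnA dvdn_mulr.
apply: carmichael_dvd => // x; rewrite !coprimeMr => /andP[/andP[/andP[cxp _] cxq] cxr].
apply/eqP; rewrite chinese_remainder ?coprimeMl ?coprime_pr ?coprime_qr //.
rewrite chinese_remainder ?coprimeMl ?coprime_pq //.
rewrite -andbA; apply/and3P; split; apply/eqP.
- have -> : T = totient (p * p) * (q.-1 %/ p * r.-1).
    by rewrite mulnn totient_pfactor // -{1}(divnK p_dvd_q1) /=; ring.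
  by apply: expn_mod1_mulr; apply: Euler_exp_totient; rewrite coprimeMr cxp.
- have -> : T = totient q * (p.-1 * r.-1) by rewrite totient_prime //; ring.
  by apply: expn_mod1_mulr; apply: Euler_exp_totient.
- have -> : T = totient r * (p.-1 * q.-1) by rewrite totient_prime //; ring.
  by apply: expn_mod1_mulr; apply: Euler_exp_totient.
Qed.

Let T_gt0 : 0 < T.
Proof. by rewrite !muln_gt0 -!subn1 !subn_gt0 !prime_gt1. Qed.

Let q_dvd_r1 : q %| r.-1.
Proof. by rewrite {1}(divn_eq r q) r_mod_q addn1 /= dvdn_mull. Qed.

Lemma pq_dvd_three_primes : p * q %| T.
Proof.
rewrite Gauss_dvd //; apply/andP; split; last exact: dvdn_mull.
exact/dvdn_mulr/dvdn_mull.
Qed.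

Lemma pp_ndvd_three_primes : ~~ (p * p %| T).
Proof.
have p_ndvd_p1 : ~~ (p %| p.-1) by rewrite gtnNdvd //; clear -p_gt2; lia.
have p_ndvd_r1 : ~~ (p %| r.-1).
  apply/negP => /eqP r1_mod; move: r_mod_p.
  rewrite -(prednK (prime_gt0 r_pr)) -addn1 -modnDml r1_mod add0n.
  by rewrite modn_small ?prime_gt1.
have -> : T = p.-1 * r.-1 * q.-1 by ring.
by rewrite Gauss_dvdr // coprimeMl coprimeMr !prime_coprime // p_ndvd_p1 p_ndvd_r1.
Qed.

Lemma r_ndvd_three_primes : ~~ (r %| T).
Proof.
by rewrite !Euclid_dvdM // !gtnNdvd //; clear -p_gt2 p_lt_q q_lt_r; lia.
Qed.

Lemma f_fun_three_primes : f_fun m = q.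
Proof.
have p_dvd_l : p %| carmichael m.
  by rewrite prime_dvd_carmichael // totient_three_primes dvdn_mulr.
have q_dvd_l : q %| carmichael m.
  by rewrite prime_dvd_carmichael // totient_three_primes dvdn_mull // dvdn_mull.
have lE := divnK p_dvd_l; set l' := carmichael m %/ p in lE.
have cl'p : coprime l' p.
  rewrite coprime_sym prime_coprime //; apply: contra pp_ndvd_three_primes => p_dvd.
  by rewrite (dvdn_trans _ carmichael_three_primes_dvd) // -lE dvdn_mul.
have cl'r : coprime l' r.
  rewrite coprime_sym prime_coprime //; apply: contra r_ndvd_three_primes => r_dvd.
  by rewrite (dvdn_trans _ carmichael_three_primes_dvd) // -lE dvdn_mulr.
have q_dvd_l' : q %| l' by move: q_dvd_l; rewrite -lE Gauss_dvdl // coprime_sym.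
rewrite /f_fun delta_three_primes totient_rad_three_primes totient_three_primes.
rewrite -lE mul1n -[l' * p * T]mulnA mulnK; last by rewrite muln_gt0 prime_gt0.
rewrite (_ : m = q * (p * p * r)); last by ring.
by rewrite gcdnC Gauss_gcdl ?coprimeMr ?cl'p ?cl'r //; apply/gcdn_idPr.
Qed.

Lemma d_fun_three_primes : d_fun m = p * q.
Proof.
rewrite /d_fun delta_three_primes mul1n totient_rad_three_primes.
have TE := divnK pq_dvd_three_primes; set T' := T %/ (p * q) in TE.
have cpT' : coprime p T'.
  rewrite prime_coprime //; apply: contra pp_ndvd_three_primes => p_dvd.
  by rewrite -TE dvdn_mul // dvdn_mulr.
have crT' : coprime r T'.
  rewrite prime_coprime //; apply: contra r_ndvd_three_primes => r_dvd.
  by rewrite -TE dvdn_mulr.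
rewrite -TE (_ : m = p * r * (p * q)); last by ring.
have cprT' : coprime (p * r) T' by rewrite coprimeMl cpT'.
by rewrite -muln_gcdl (eqP cprT') mul1n.
Qed.

End ThreePrimes.

Lemma chinese_two_one p q : 2 < p -> odd p -> 1 < q -> coprime p q ->
  exists a, [/\ 0 < a < p * q, coprime a (p * q), a %% p = 2 & a %% q = 1].
Proof.
move=> p_gt2 p_odd q_gt1 cpq; set a := chinese p q 2 1 %% (p * q).
have ap : a %% p = 2 by rewrite modn_dvdm ?dvdn_mulr // chinese_modl // modn_small.
have aq : a %% q = 1 by rewrite modn_dvdm ?dvdn_mull // chinese_modr // modn_small.
have a_gt0 : 0 < a by rewrite lt0n; apply/eqP => a0; move: ap; rewrite a0 mod0n.
exists a; split => //; first by rewrite a_gt0 ltn_pmod // muln_gt0; lia.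
by rewrite coprimeMr -coprime_modl ap coprime2n p_odd -coprime_modl aq coprime1n.
Qed.

Lemma INR_mul_le_Rpower_add1 (c L : R) (p n r : nat) : 0 < n ->
  (INR r <= c * Rpower (INR n) L)%R ->
  (INR (p * n * r) <= c * INR p * Rpower (INR n) (L + 1))%R.
Proof.
move=> n_gt0 r_le; have n_pos : (0 < INR n)%R by apply/lt_0_INR/ltP.
rewrite Rpower_plus Rpower_1 // !mult_INR.
have pn_ge0 : (0 <= INR p * INR n)%R by apply: Rmult_le_pos; [apply: pos_INR | lra].
have := Rmult_le_compat_l _ _ _ pn_ge0 r_le; nra.
Qed.

Theorem theorem1p4 :
  (forall n : nat, odd n -> 1 < n ->
     (forall m : nat, 0 < m -> ~ (f_fun m = n /\ d_fun m = 2 * n)) /\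
     (forall m : nat, 0 < m -> ~ (f_fun m = n /\ d_fun m = 4 * n)))
  /\
  (forall L : R, linnik_constant L ->
     exists C : R, (0 < C)%R /\
       forall p q : nat, prime p -> prime q -> odd p -> odd q -> p < q ->
         p %| q - 1 -> ~~ (p * p %| q - 1) ->
         exists m : nat, 0 < m /\
           (INR m <= C * INR p * Rpower (INR (p * q)) (L + 1))%R /\
           f_fun m = q /\ d_fun m = p * q).
Proof.
split.
  move=> n n_odd n_gt1; split=> m m_gt0 [fE dE].
    by case/eqP: (d_fun_neq_odd_mul n_odd n_gt1 m_gt0 (or_introl erefl) fE).
  by case/eqP: (d_fun_neq_odd_mul n_odd n_gt1 m_gt0 (or_intror erefl) fE).
move=> L [_ [c [c_gt0 linnik]]]; exists c; split=> // p q p_pr q_pr p_odd _ p_lt_q.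
rewrite subn1 => p_dvd pp_ndvd; have p_gt2 := odd_prime_gt2 p_odd p_pr.
have cpq : coprime p q by rewrite prime_coprime // dvdn_prime2 // ltn_eqF.
have [a [/andP[a_gt0 a_lt] ca ap aq]] :=
  chinese_two_one p_gt2 p_odd (prime_gt1 q_pr) cpq.
have [j [r_pr r_le]] := linnik a (p * q) a_gt0 a_lt ca.
set r := a + j * (p * q) in r_pr r_le.
have rp : r %% p = 2 by rewrite /r (mulnC p) mulnA addnC modnMDl.
have rq : r %% q = 1 by rewrite /r mulnA addnC modnMDl.
exists (p * p * q * r); split; first by rewrite !muln_gt0 !prime_gt0.
split.
  rewrite -(mulnA p p q); apply: INR_mul_le_Rpower_add1 r_le.
  by rewrite muln_gt0 !prime_gt0.
by rewrite f_fun_three_primes ?d_fun_three_primes.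
Qed.
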